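(* Let $Z_1, Z_2, \ldots$ be i.i.d. from a distribution $\mathcal{D}$ on a set $\mathbb{Z}$, let $\ell:\Theta\times\mathbb{Z}\to[0,\infty)$ be a loss function with risk $R(\theta)=\mathbb{E}_{Z\sim\mathcal{D}}\{\ell(\theta;Z)\}$ and risk minimizer $\theta^*=\arg\min_{\theta\in\Theta}R(\theta)$. Suppose the strong central condition holds with learning rate $\bar\omega>0$. For $k\ge 1$ let $\widehat\theta_k$ be any almost-empirical-risk-minimizer (AERM) computed from $Z^k=(Z_1,\ldots,Z_k)$, let $\widehat\theta_0\in\Theta$ be a fixed constant, and for $\omega\ge 0$ define the online GUe-value $$G_{n,\mathrm{on}}(\theta)=\exp\Bigl[-\omega\sum_{i=1}^n\{\ell(\widehat\theta_{i-1};Z_i)-\ell(\theta;Z_i)\}\Bigr].$$ If $\omega\in[0,\bar\omega)$, then $(G_{n,\mathrm{on}}(\theta^* ))_{n\in\mathbb{N}}$ is an e-process.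
   Context: The empirical risk is $\widehat R_n(\theta)=n^{-1}\sum_{i=1}^n\ell(\theta;Z_i)$. For fixed constants $\varepsilon,\delta\ge0$, an $(\varepsilon,\delta)$-AERM based on $Z^n$ is an estimator $\widehat\theta_n$ (a measurable function of $Z^n$) with $\widehat R_n(\widehat\theta_n)\le\inf_{\theta\in\Theta}\widehat R_n(\theta)+\delta/n^{1+\varepsilon}$; an AERM is an $(\varepsilon,\delta)$-AERM for some such constants. Strong central condition with learning rate $\bar\omega>0$: $\mathbb{E}_{Z\sim\mathcal{D}}\exp[-\omega\{\ell(\theta;Z)-\ell(\theta^*;Z)\}]\le1$ for all $\theta\in\Theta$ and all $\omega\in[0,\bar\omega)$. An e-process is a non-negative supermartingale $(E_n)_{n\in\mathbb{N}}$ (with respect to the filtration generated by the data) such that $\mathbb{E}(E_\tau)\le 1$ for every stopping time $\tau$. *)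

From HB Require Import structures.
From mathcomp Require Import all_boot all_order all_algebra.
From mathcomp Require Import all_classical all_reals all_analysis.
Set Implicit Arguments. Unset Strict Implicit. Unset Printing Implicit Defensive.
Import Order.TTheory GRing.Theory Num.Theory.
Local Open Scope classical_set_scope.
Local Open Scope ring_scope.

Section defs.
Context {R : realType}.

Definition mutually_independent {dO dZ} {Om : measurableType dO}
  {Zs : measurableType dZ} (P : probability Om R) (Z : nat -> Om -> Zs) :=
  forall (I : seq nat) (B : nat -> set Zs), uniq I ->
    (forall i, measurable (B i)) ->
    P (\bigcap_(i in [set j | j \in I]) (Z i @^-1` B i)) =
    (\prod_(i <- I) P (Z i @^-1` B i))%E.

Definition has_law {dO dZ} {Om : measurableType dO} {Zs : measurableType dZ}
  (P : probability Om R) (X : Om -> Zs) (D : probability Zs R) :=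
  forall B, measurable B -> P (X @^-1` B) = D B.

Definition data_filtration {dO dZ} {Om : measurableType dO}
  {Zs : measurableType dZ} (Z : nat -> Om -> Zs) (n : nat) : set (set Om) :=
  <<s [set A | exists i, (i < n)%N /\ exists B, measurable B /\ A = Z i @^-1` B] >>.

Definition measurable_wrt {dT} {Om : Type} {T : measurableType dT}
  (F : set (set Om)) (X : Om -> T) :=
  forall B, measurable B -> F (X @^-1` B).

Definition stopping_time {Om : Type} (F : nat -> set (set Om)) (tau : Om -> nat) :=
  forall n, F n (tau @^-1` [set n]).

(* Non-negative supermartingale w.r.t. F: adapted, integrable, and
   E[E_{n+1} | F_n] <= E_n a.s., written through the defining property of
   conditional expectation: for all A in F_n, E[E_{n+1} 1_A] <= E[E_n 1_A]. *)
Definition nonneg_supermartingale {dO} {Om : measurableType dO}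
  (P : probability Om R) (F : nat -> set (set Om)) (E : nat -> Om -> R) :=
  [/\ forall n x, 0 <= E n x,
      forall n, measurable_wrt (F n) (E n),
      forall n, P.-integrable setT (fun x => (E n x)%:E) &
      forall n A, F n A ->
        (\int[P]_(x in A) (E n.+1 x)%:E <= \int[P]_(x in A) (E n x)%:E)%E].

Definition e_process {dO} {Om : measurableType dO}
  (P : probability Om R) (F : nat -> set (set Om)) (E : nat -> Om -> R) :=
  nonneg_supermartingale P F E /\
  forall tau : Om -> nat, stopping_time F tau ->
    (\int[P]_x (E (tau x) x)%:E <= 1)%E.

Definition emp_risk {Om Th Zs : Type} (loss : Th -> Zs -> R)
  (Z : nat -> Om -> Zs) (k : nat) (x : Om) (th : Th) : R :=
  k%:R^-1 * \sum_(i < k) loss th (Z i x).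

Definition is_AERM {Om Th Zs : Type} (loss : Th -> Zs -> R)
  (Z : nat -> Om -> Zs) (thhat : nat -> Om -> Th) (eps delta : R) :=
  forall k x, (1 <= k)%N ->
    emp_risk loss Z k x (thhat k x) <=
    inf (range (emp_risk loss Z k x)) + delta / (k%:R `^ (1 + eps)).

Definition risk {dZ} {Th : Type} {Zs : measurableType dZ} (D : probability Zs R)
  (loss : Th -> Zs -> R) (th : Th) : \bar R :=
  (\int[D]_z (loss th z)%:E)%E.

Definition strong_central {dZ} {Th : Type} {Zs : measurableType dZ}
  (D : probability Zs R) (loss : Th -> Zs -> R) (thstar : Th) (wbar : R) :=
  forall th w, 0 <= w -> w < wbar ->
    (\int[D]_z (expR (- w * (loss th z - loss thstar z)))%:E <= 1)%E.

(* Online GUe-value G_{n,on}(theta), data indexed from 0 *)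
Definition G_on {Om Th Zs : Type} (loss : Th -> Zs -> R) (Z : nat -> Om -> Zs)
  (thhat : nat -> Om -> Th) (w : R) (th : Th) (n : nat) (x : Om) : R :=
  expR (- w * \sum_(i < n) (loss (thhat i x) (Z i x) - loss th (Z i x))).

End defs.

From HB Require Import structures.
From mathcomp Require Import all_boot all_order all_algebra.
From mathcomp Require Import all_classical all_reals all_analysis.
From mathcomp Require Import measurable_realfun.
Import Order.TTheory GRing.Theory Num.Theory.
Local Open Scope classical_set_scope.
Local Open Scope ring_scope.

(* G_{n+1} = G_n * exp(-w (loss(thhat_n; Z_n) - loss(thstar; Z_n))), where G_n and
   thhat_n are functions of Z_0, ..., Z_{n-1} while Z_n is independent of them
   with law D. The joint law of (Z_0, ..., Z_{n-1}; Z_n) is therefore a product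
   measure, and integrating out Z_n first (Tonelli) costs at most a factor 1 by
   the strong central condition: G is a nonnegative supermartingale with G_0 = 1.
   For a stopping time tau, splitting the sample space along {tau = k} and
   {tau > k} gives by induction on M the invariant
   sum_{k<M} E[G_k; tau = k] + E[G_M; tau >= M] <= 1, hence E[G_tau] <= 1. *)

Section optional_stopping.
Context {R : realType} {dO : measure_display} {Om : measurableType dO}.
Variables (P : probability Om R) (F : nat -> set (set Om)) (E : nat -> Om -> R).
Hypothesis F_sigma : forall n, sigma_algebra setT (F n).
Hypothesis F_sub : forall n, F n `<=` measurable.
Hypothesis F_mono : forall n, F n `<=` F n.+1.
Hypothesis E_ge0 : forall n x, 0 <= E n x.
Hypothesis E_adapted : forall n, measurable_wrt (F n) (E n).
Hypothesis E_step : forall n A, F n A ->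
  (\int[P]_(x in A) (E n.+1 x)%:E <= \int[P]_(x in A) (E n x)%:E)%E.
Hypothesis E0_le1 : (\int[P]_x (E 0%N x)%:E <= 1)%E.

Let F_setT n : F n setT.
Proof.
rewrite -(sigma_algebra_id (F_sigma n)).
exact: (@measurableT _ (g_sigma_algebraType (F n))).
Qed.

Let F_setIC n A B : F n A -> F n B -> F n (A `&` ~` B).
Proof.
rewrite -(sigma_algebra_id (F_sigma n)) => FA FB.
exact: (@measurableI _ (g_sigma_algebraType (F n)) _ _ FA
  (@measurableC _ (g_sigma_algebraType (F n)) _ FB)).
Qed.

Let E_measurable n : measurable_fun setT (fun x => (E n x)%:E).
Proof.
by apply/measurable_EFinP => _ B mB; rewrite setTI; apply/F_sub/E_adapted.
Qed.

Let E_nonneg n x : (0 <= (E n x)%:E)%E.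
Proof. by rewrite lee_fin. Qed.

Lemma supermartingale_integral_le1 n : (\int[P]_x (E n x)%:E <= 1)%E.
Proof. by elim: n => // n IH; apply: le_trans _ IH; apply/E_step/F_setT. Qed.

Lemma supermartingale_integrable n : P.-integrable setT (fun x => (E n x)%:E).
Proof.
apply/integrableP; split; first exact: E_measurable.
under eq_integral do rewrite gee0_abs //.
exact: le_lt_trans (supermartingale_integral_le1 n) (ltry _).
Qed.

Section stopped.
Variable tau : Om -> nat.
Hypothesis tau_stop : stopping_time F tau.

Let tau_eq k := tau @^-1` [set k].
Let tau_ge k := [set x | (k <= tau x)%N].

Let measurable_tau_eq k : measurable (tau_eq k).
Proof. exact/F_sub/tau_stop. Qed.

Let tau_geS k : tau_ge k.+1 = tau_ge k `&` ~` tau_eq k.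
Proof.
apply/seteqP; split => x; rewrite /tau_ge /tau_eq /=.
  by move=> lt_k; split; [exact: ltnW | move=> eq_k; rewrite eq_k ltnn in lt_k].
by move=> [le_k /eqP ne_k]; rewrite ltn_neqAle eq_sym ne_k.
Qed.

Let tau_ge_split k : tau_ge k = tau_eq k `|` tau_ge k.+1.
Proof.
apply/seteqP; split => x; rewrite /tau_ge /tau_eq /=.
  by rewrite leq_eqVlt => /orP[/eqP ->|lt_k]; [left|right].
by move=> [->|/ltnW].
Qed.

Let F_tau_gt k : F k (tau_ge k.+1).
Proof.
elim: k => [|k IH]; rewrite tau_geS; apply: F_setIC => //.
- by rewrite (_ : tau_ge 0 = setT) //; apply/seteqP; split.
- exact: F_mono.
Qed.

Let stopped_partial_le1 M : (\sum_(0 <= k < M)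
    \int[P]_(x in tau_eq k) (E k x)%:E + \int[P]_(x in tau_ge M) (E M x)%:E
    <= 1)%E.
Proof.
elim: M => [|M IH].
  rewrite big_geq // add0e (_ : tau_ge 0 = setT) //.
  by apply/seteqP; split.
apply: le_trans _ IH; rewrite big_nat_recr // -addeA; apply: leeD2l.
rewrite (tau_ge_split M).
rewrite (ge0_integral_setU _ (measurable_tau_eq M) (F_sub _ _ (F_tau_gt M))).
- exact/leeD2l/E_step/F_tau_gt.
- exact: measurable_funTS.
- by move=> x _; exact: E_nonneg.
- by apply/disj_set2P; rewrite tau_geS setICA setICr setI0.
Qed.

Lemma stopped_supermartingale_integral_le1 :
  (\int[P]_x (E (tau x) x)%:E <= 1)%E.
Proof.
have tau_eq_cover : \bigcup_k tau_eq k = setT.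
  by apply/seteqP; split => x // _; exists (tau x).
rewrite -tau_eq_cover ge0_integral_bigcup //; first last.
- exact: trivIset_preimage1.
- apply/(measurable_fun_bigcup _ measurable_tau_eq) => k.
  apply: (eq_measurable_fun (fun x => (E k x)%:E)); last exact: measurable_funTS.
  by move=> x; rewrite inE => <-.
have integral_tau_eq k : (\int[P]_(x in tau_eq k) (E (tau x) x)%:E
    = \int[P]_(x in tau_eq k) (E k x)%:E)%E.
  by apply: eq_integral => x; rewrite inE => <-.
apply: lime_le; first by apply: is_cvg_nneseries => k _ _; exact: integral_ge0.
apply: nearW => M; rewrite (eq_bigr _ (fun k _ => integral_tau_eq k)).
apply: le_trans (stopped_partial_le1 M); apply: leeDl.
exact: integral_ge0.
Qed.

End stopped.

Lemma supermartingale_e_process : e_process P F E.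
Proof.
split; last exact: stopped_supermartingale_integral_le1.
by split => //; exact: supermartingale_integrable.
Qed.

End optional_stopping.

Section past_and_present.
Context {R : realType} {dO dZ : measure_display}.
Context {Om : measurableType dO} {Zs : measurableType dZ}.
Variables (P : probability Om R) (D : probability Zs R) (Z : nat -> Om -> Zs).
Hypothesis mZ : forall i, measurable_fun setT (Z i).

Definition data_events n : set (set Om) :=
  [set A | exists i, (i < n)%N /\ exists B, measurable B /\ A = Z i @^-1` B].

(* The measurable sets of [past_space n] are, by conversion, those of
   [data_filtration Z n]. *)
Definition past_space n := g_sigma_algebraType (data_events n).

Lemma data_filtration_sub n : data_filtration Z n `<=` measurable.
Proof.
apply: smallest_sub; first exact: sigma_algebra_measurable.
by move=> _ [i [_ [B [mB ->]]]]; rewrite -[_ @^-1` _]setTI; exact: mZ.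
Qed.

Lemma data_filtration_le m n :
  (m <= n)%N -> data_filtration Z m `<=` data_filtration Z n.
Proof.
move=> le_mn; apply: smallest_sub; first exact: smallest_sigma_algebra.
move=> A [i [lt_im evB]]; apply: sub_sigma_algebra.
by exists i; split => //; exact: leq_trans lt_im le_mn.
Qed.

Lemma measurable_past k n dT (T : measurableType dT) (f : Om -> T) :
  (k <= n)%N -> measurable_wrt (data_filtration Z k) f ->
  measurable_fun setT (f : past_space n -> T).
Proof.
by move=> le_kn mf _ B mB; rewrite setTI; exact: data_filtration_le (mf B mB).
Qed.

Lemma measurable_wrt_past n dT (T : measurableType dT) (f : Om -> T) :
  measurable_fun setT (f : past_space n -> T) ->
  measurable_wrt (data_filtration Z n) f.
Proof. by move=> mf B mB; rewrite -[_ @^-1` _]setTI; exact: mf. Qed.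

Lemma measurable_past_Z i n :
  (i < n)%N -> measurable_fun setT (Z i : past_space n -> Zs).
Proof.
move=> lt_in _ B mB; rewrite setTI; apply: sub_sigma_algebra.
by exists i; split => //; exists B.
Qed.

Definition to_past n : Om -> past_space n := id.
Definition past_present n (x : Om) : past_space n * Zs := (to_past n x, Z n x).

Lemma measurable_to_past n : measurable_fun setT (to_past n).
Proof. by move=> _ B mB; rewrite setTI; exact: data_filtration_sub n B mB. Qed.

Lemma measurable_fun_of_past n dT (T : measurableType dT) (f : Om -> T) :
  measurable_fun setT (f : past_space n -> T) -> measurable_fun setT f.
Proof. by move=> mf; exact: measurableT_comp mf (measurable_to_past n). Qed.

Lemma measurable_past_present n : measurable_fun setT (past_present n).
Proof. exact: measurable_fun_pair (measurable_to_past n) (mZ n). Qed.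

HB.instance Definition _ n :=
  isMeasurableFun.Build _ _ Om (past_space n) (to_past n) (measurable_to_past n).
HB.instance Definition _ n := isMeasurableFun.Build _ _ Om (past_space n * Zs)%type
  (past_present n) (measurable_past_present n).

Definition cylinder n : set (set Om) := [set A | exists2 B : nat -> set Zs,
  (forall i, measurable (B i)) & A = \bigcap_(i in `I_n) (Z i @^-1` B i)].

Lemma measurable_cylinder n A :
  cylinder n A -> measurable (A : set (past_space n)).
Proof.
move=> [B mB ->]; apply: bigcap_measurableType => i lt_in.
by apply: sub_sigma_algebra; exists i; split => //; exists (B i).
Qed.

Lemma cylinderT n : cylinder n setT.
Proof. by exists (fun=> setT) => //; apply/seteqP; split. Qed.

Lemma setI_closed_cylinder n : setI_closed (cylinder n).
Proof.
move=> _ _ [B1 mB1 ->] [B2 mB2 ->].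
exists (fun i => B1 i `&` B2 i); first by move=> i; exact: measurableI.
apply/seteqP; split => x /=.
  by move=> [h1 h2] i lt_in; split; [exact: h1|exact: h2].
by move=> h; split => i lt_in; have [] := h i lt_in.
Qed.

Lemma data_events_cylinder n : data_events n `<=` cylinder n.
Proof.
move=> _ [i [lt_in [B [mB ->]]]].
exists (fun j => if j == i then B else setT); first by move=> j; case: ifP.
apply/seteqP; split => x /=.
  by move=> Bx j _; case: eqP => [->|].
by move=> h; have := h i lt_in; rewrite eqxx.
Qed.

Definition past_rectangles n : set (set (past_space n * Zs)) :=
  [set A `*` C | A in cylinder n & C in measurable].

Lemma measurable_past_rectangles n :
  measurable = <<s past_rectangles n >>.
Proof.
apply/seteqP; split; last first.
  apply: smallest_sub; first exact: sigma_algebra_measurable.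
  move=> _ [A cA [C mC <-]]; apply: measurableX => //; exact: measurable_cylinder.
have past_times_setT : @measurable _ (past_space n) `<=`
    [set A | <<s past_rectangles n >> (A `*` setT)].
  suff : data_filtration Z n `<=`
      image_set_system setT fst <<s past_rectangles n >>.
    by move=> sub A /sub; rewrite /image_set_system /= setTI -setXT.
  apply: smallest_sub; first exact/sigma_algebra_image/smallest_sigma_algebra.
  move=> A /data_events_cylinder cA; rewrite /image_set_system /= setTI -setXT.
  by apply: sub_sigma_algebra; exists A => //; exists setT.
rewrite measurable_prod_measurableType.
apply: smallest_sub; first exact: smallest_sigma_algebra.
move=> _ [A mA [C mC <-]]; rewrite -[A]setIT -[C]setTI setXI.
apply: (@measurableI _ (g_sigma_algebraType (past_rectangles n))).
  exact: past_times_setT.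
by apply: sub_sigma_algebra; exists setT; [exact: cylinderT | exists C].
Qed.

Hypothesis indep : mutually_independent P Z.
Hypothesis law : forall i, has_law P (Z i) D.

Lemma probability_cylinder n (B : nat -> set Zs) :
  (forall i, measurable (B i)) ->
  P (\bigcap_(i in `I_n) (Z i @^-1` B i)) = (\prod_(0 <= i < n) D (B i))%E.
Proof.
move=> mB; have := indep (iota 0 n) B (iota_uniq 0 n) mB.
have -> : [set j | j \in iota 0 n] = `I_n.
  by apply/seteqP; split => j /=; rewrite mem_iota add0n.
move=> ->; rewrite /index_iota subn0.
by apply: eq_bigr => i _; exact: law.
Qed.

Lemma past_present_rectangle n A C : cylinder n A -> measurable C ->
  distribution P (past_present n) (A `*` C) =
  (distribution P (to_past n) A * D C)%E.
Proof.
move=> [B mB ->] mC.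
pose B' i := if i == n then C else B i.
have mB' i : measurable (B' i) by rewrite /B'; case: ifP.
rewrite /distribution /pushforward /=.
rewrite -[to_past n @^-1` _]/(\bigcap_(i in `I_n) (Z i @^-1` B i)).
have -> : past_present n @^-1` ((\bigcap_(i in `I_n) (Z i @^-1` B i)) `*` C) =
    \bigcap_(i in `I_n.+1) (Z i @^-1` B' i).
  apply/seteqP; split => x /=.
    move=> [hB hC] i /=; rewrite ltnS leq_eqVlt => /orP[/eqP ->|lt_in].
      by rewrite /B' eqxx.
    by rewrite /B' (ltn_eqF lt_in); exact: hB.
  move=> h; split; last by have := h n (ltnSn n); rewrite /B' eqxx.
  by move=> i lt_in; have := h i (ltnW lt_in); rewrite /B' (ltn_eqF lt_in).
rewrite !probability_cylinder //.
rewrite big_nat_recr //= /B' eqxx; congr (_ * _)%E.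
by apply: eq_big_nat => i /andP[_ lt_in]; rewrite (ltn_eqF lt_in).
Qed.

Lemma distribution_past_present n :
  {in measurable, distribution P (past_present n) =1
                  (distribution P (to_past n) \x D)%E}.
Proof.
move=> X /[!inE]; apply: (measure_unique (past_rectangles n) (fun=> setT)).
- exact: measurable_past_rectangles.
- move=> _ _ [A1 cA1 [C1 mC1 <-]] [A2 cA2 [C2 mC2 <-]]; rewrite -setXI.
  exists (A1 `&` A2); first exact: setI_closed_cylinder.
  by exists (C1 `&` C2) => //; exact: measurableI.
- by move=> _; exists setT; [exact: cylinderT | exists setT; rewrite ?setXTT].
- by apply/seteqP; split => // x _; exists 0%N.
- move=> _ [A cA [C mC <-]].
  transitivity (distribution P (to_past n) A * D C)%E.
    exact: past_present_rectangle.
  by apply/esym/product_measure1E => //; exact: measurable_cylinder.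
- by move=> _; apply: (le_lt_trans (probability_le1 _ measurableT)); rewrite ltry.
Qed.

Lemma integral_past_present n (f : past_space n * Zs -> \bar R) :
  measurable_fun setT f -> (forall p, (0 <= f p)%E) ->
  (\int[P]_x f (x, Z n x) = \int[P]_x \int[D]_z f (x, z))%E.
Proof.
move=> mf f0.
have -> : (\int[P]_x f (x, Z n x) =
    \int[distribution P (past_present n)]_p f p)%E.
  by rewrite /distribution (ge0_integral_pushforward (measurable_past_present n)).
rewrite (eq_measure_integral (distribution P (to_past n) \x D)%E); last first.
  by move=> A mA _; apply: distribution_past_present; rewrite inE.
rewrite fubini_tonelli1 // /distribution.
rewrite (ge0_integral_pushforward (measurable_to_past n)) //.
- exact: measurable_fun_fubini_tonelli_F.
- by move=> x _; exact: integral_ge0.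
Qed.

Section supermartingale_step.
Context {dT : measure_display} {Th : measurableType dT}.
Variable h : Th -> Zs -> R.
Hypothesis h_ge0 : forall th z, 0 <= h th z.
Hypothesis mh : measurable_fun setT (fun p : Th * Zs => h p.1 p.2).
Hypothesis h_le1 : forall th, (\int[D]_z (h th z)%:E <= 1)%E.

Lemma integral_mul_present_le n (Y : Om -> R) (T : Om -> Th) :
  (forall x, 0 <= Y x) ->
  measurable_fun setT (Y : past_space n -> R) ->
  measurable_fun setT (T : past_space n -> Th) ->
  (\int[P]_x (Y x * h (T x) (Z n x))%:E <= \int[P]_x (Y x)%:E)%E.
Proof.
move=> Y_ge0 mY mT.
pose f (p : past_space n * Zs) := (Y p.1 * h (T p.1) p.2)%:E.
have mf : measurable_fun setT f.
  apply/measurable_EFinP/measurable_funM.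
    exact: measurableT_comp mY measurable_fst.
  exact: measurableT_comp mh
    (measurable_fun_pair (measurableT_comp mT measurable_fst) measurable_snd).
have f_ge0 p : (0 <= f p)%E by rewrite lee_fin mulr_ge0.
rewrite [leLHS](integral_past_present n f) //.
apply: ge0_le_integral => //.
- by move=> x _; exact: integral_ge0.
- by apply: (measurable_fun_of_past n); exact: measurable_fun_fubini_tonelli_F.
- by apply/measurable_EFinP; exact: (measurable_fun_of_past n).
move=> x _; rewrite /f /=.
under eq_integral do rewrite EFinM.
rewrite ge0_integralZl_EFin //.
- by rewrite -[leRHS]mule1; apply: lee_wpmul2l; rewrite ?lee_fin.
- by move=> z _; rewrite lee_fin.
- apply/measurable_EFinP.
  exact: measurableT_comp mh
    (measurable_fun_pair (measurable_cst (T x)) (@measurable_id _ Zs setT)).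
Qed.

End supermartingale_step.

Section online_GUe_value.
Context {dT : measure_display} {Th : measurableType dT}.
Variables (loss : Th -> Zs -> R) (thstar : Th) (w : R) (thhat : nat -> Om -> Th).
Hypothesis mloss : measurable_fun setT (fun p : Th * Zs => loss p.1 p.2).
Hypothesis central : forall th,
  (\int[D]_z (expR (- w * (loss th z - loss thstar z)))%:E <= 1)%E.
Hypothesis mthhat : forall k, measurable_wrt (data_filtration Z k) (thhat k).

Local Notation G := (G_on loss Z thhat w thstar).

Let exp_excess th z := expR (- w * (loss th z - loss thstar z)).

Let measurable_excess {dX} {X : measurableType dX} {T : X -> Th} {g : X -> Zs} :
  measurable_fun setT T -> measurable_fun setT g ->
  measurable_fun setT (fun x => loss (T x) (g x) - loss thstar (g x)).
Proof.
move=> mT mg; apply: measurable_funB.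
  exact: measurableT_comp mloss (measurable_fun_pair mT mg).
exact: measurableT_comp mloss (measurable_fun_pair (measurable_cst thstar) mg).
Qed.

Let measurable_exp_excess :
  measurable_fun setT (fun p : Th * Zs => exp_excess p.1 p.2).
Proof.
exact: measurableT_comp (@measurable_expR R)
  (measurable_funM (measurable_cst (- w))
    (measurable_excess measurable_fst measurable_snd)).
Qed.

Lemma G_onS n x : G n.+1 x = G n x * exp_excess (thhat n x) (Z n x).
Proof. by rewrite /G_on big_ord_recr /= mulrDr expRD. Qed.

Lemma G_on0 x : G 0 x = 1.
Proof. by rewrite /G_on big_ord0 mulr0 expR0. Qed.

Lemma measurable_G_on n : measurable_fun setT (G n : past_space n -> R).
Proof.
have msum : measurable_fun setT (fun x : past_space n =>
    \sum_(i < n) (loss (thhat i x) (Z i x) - loss thstar (Z i x))).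
  apply: measurable_sum => i; apply: measurable_excess.
  - exact: measurable_past (ltnW (ltn_ord i)) (mthhat i).
  - exact: measurable_past_Z.
exact: measurableT_comp (@measurable_expR R)
  (measurable_funM (measurable_cst (- w)) msum).
Qed.

Lemma G_on_step n A : data_filtration Z n A ->
  (\int[P]_(x in A) (G n.+1 x)%:E <= \int[P]_(x in A) (G n x)%:E)%E.
Proof.
move=> FA; rewrite !(integral_mkcond A).
have patch_indic k :
    (fun x => (G k x)%:E) \_ A = (fun x => (\1_A x * G k x)%:E).
  apply/funext => x; rewrite patchE indicE.
  by case: (x \in A); rewrite ?mul1r ?mul0r.
rewrite !patch_indic; under eq_integral do rewrite G_onS mulrA.
apply: (integral_mul_present_le exp_excess (fun _ _ => expR_ge0 _)
  measurable_exp_excess central).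
- by move=> x; rewrite mulr_ge0 ?indicE ?expR_ge0.
- apply: measurable_funM (measurable_G_on n).
  exact: measurable_indic.
- exact: measurable_past (leqnn n) (mthhat n).
Qed.

Lemma G_on_e_process : e_process P (data_filtration Z) G.
Proof.
apply: supermartingale_e_process.
- by move=> n; exact: smallest_sigma_algebra.
- exact: data_filtration_sub.
- by move=> n; apply: data_filtration_le.
- by move=> n x; exact: expR_ge0.
- by move=> n; apply: measurable_wrt_past; exact: measurable_G_on.
- exact: G_on_step.
- under eq_integral do rewrite G_on0.
  by rewrite integral_cst // mul1e probability_le1.
Qed.

End online_GUe_value.

End past_and_present.

Theorem lemma1 (R : realType) (dO dZ dT : measure_display)
  (Om : measurableType dO) (Zs : measurableType dZ) (Th : measurableType dT)
  (P : probability Om R) (D : probability Zs R) (Z : nat -> Om -> Zs)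
  (loss : Th -> Zs -> R) (thstar : Th) (wbar w : R)
  (thhat : nat -> Om -> Th) (th0 : Th) :
  (forall i, measurable_fun setT (Z i)) ->
  mutually_independent P Z ->
  (forall i, has_law P (Z i) D) ->
  (forall th z, 0 <= loss th z) ->
  measurable_fun setT (fun p : Th * Zs => loss p.1 p.2) ->
  (forall th, (risk D loss thstar <= risk D loss th)%E) ->
  0 < wbar ->
  strong_central D loss thstar wbar ->
  (forall k, measurable_wrt (data_filtration Z k) (thhat k)) ->
  (exists eps delta : R, 0 <= eps /\ 0 <= delta /\ is_AERM loss Z thhat eps delta) ->
  (forall x, thhat 0%N x = th0) ->
  0 <= w -> w < wbar ->
  e_process P (data_filtration Z) (G_on loss Z thhat w thstar).
Proof.
move=> mZ indep law _ mloss _ _ central mthhat _ _ w_ge0 w_lt_wbar.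
apply: (G_on_e_process P D Z mZ indep law loss thstar w thhat mloss _ mthhat).
by move=> th; exact: central th w w_ge0 w_lt_wbar.
Qed.
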